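(* Let $\phi:\Delta\to\mathbb R$ be continuous, and for each $n$ and each pair of partitions $\lambda,\mu\vdash n$ let $\phi^{(\lambda)}_n(\mu)\in\mathbb R$ be given, such that there is a sequence $\delta_n\to0$ (not depending on $\lambda,\mu$) with $|\phi^{(\lambda)}_n(\mu)-\phi(\mu/n)|\le\delta_n$ for all $n,\lambda,\mu$. If $n\to\infty$ and $\lambda=\lambda^{(n)}\vdash n$ satisfies $\lambda/n\to x\in\Delta$, then \[ \frac1n\log\Big(\sum_{\mu\vdash n,\ \mu\trianglerighteq\lambda}\exp\big(n\,\phi^{(\lambda)}_n(\mu)\big)\Big)\to\max_{y\in\Delta(x)}\phi(y). \]
   Context: Fix $\theta\in\{2,3,\dots\}$. A partition $\lambda\vdash n$ means a vector $(\lambda_1,\dots,\lambda_\theta)$ of nonnegative integers with $\lambda_1\ge\dots\ge\lambda_\theta$ and $\sum\lambda_i=n$ (so $\lambda/n\in\Delta$). $\Delta=\{x\in[0,1]^\theta:x_1\ge\dots\ge x_\theta,\ \sum_i x_i=1\}$. For vectors $x,y$ in $\Delta$ (or partitions), $y\trianglerighteq x$ means $y_1+\dots+y_i\ge x_1+\dots+x_i$ for all $i$, and $\Delta(x)=\{y\in\Delta:y\trianglerighteq x\}$. *)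

From HB Require Import structures.
From mathcomp Require Import all_boot all_order all_algebra.
From mathcomp Require Import all_classical all_reals all_analysis.
Set Implicit Arguments. Unset Strict Implicit. Unset Printing Implicit Defensive.
Import Order.TTheory GRing.Theory Num.Theory.
Import numFieldNormedType.Exports.
Local Open Scope ring_scope.

(* lam is a partition of n into (at most) th parts: a nonincreasing
   vector (lam_1,...,lam_th) of naturals summing to n. *)
Definition is_part (th n : nat) (lam : 'I_th -> nat) : bool :=
  [forall i : 'I_th, forall j : 'I_th, (i <= j)%N ==> (lam j <= lam i)%N]
  && ((\sum_(i < th) lam i)%N == n).

(* dominance order on partitions: dom_nat mu lam  <->  mu |>= lam *)
Definition dom_nat (th : nat) (mu lam : 'I_th -> nat) : bool :=
  [forall i : 'I_th,
     (\sum_(j < th | (j <= i)%N) lam j <= \sum_(j < th | (j <= i)%N) mu j)%N].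

Definition Delta (R : realType) (th : nat) : set 'rV[R]_th :=
  [set x | (forall i : 'I_th, 0 <= x ord0 i <= 1)
         /\ (forall i j : 'I_th, (i <= j)%N -> x ord0 j <= x ord0 i)
         /\ \sum_(i < th) x ord0 i = 1].

(* dominance order on real vectors: dom_real y x <-> y |>= x *)
Definition dom_real (R : realType) (th : nat) (y x : 'rV[R]_th) : Prop :=
  forall i : 'I_th,
    \sum_(j < th | (j <= i)%N) x ord0 j <= \sum_(j < th | (j <= i)%N) y ord0 j.

Definition DeltaDom (R : realType) (th : nat) (x : 'rV[R]_th) : set 'rV[R]_th :=
  [set y | @Delta R th y /\ dom_real y x].

Definition normalize (R : realType) (th n : nat) (lam : 'I_th -> nat) : 'rV[R]_th :=
  \row_i ((lam i)%:R / n%:R).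

From HB Require Import structures.
From mathcomp Require Import all_boot all_order all_algebra.
From mathcomp Require Import all_classical all_reals all_analysis.
From mathcomp Require Import ring lra.
Import Order.TTheory GRing.Theory Num.Theory.
Import numFieldNormedType.Exports.
Local Open Scope classical_set_scope.
Local Open Scope ring_scope.
Set Implicit Arguments. Unset Strict Implicit. Unset Printing Implicit Defensive.

(* Let y maximize phi on the compact set Delta(x).  Upper bound: the sum has at most
   (n+1)^th terms, and every mu |>= lambda gives mu/n |>= lambda/n ~ x, so mu/n lies
   in Delta and dominates x up to a vanishing error; by compactness phi(mu/n) is then
   below phi(y) + eps, and the polynomial number of terms disappears after
   (1/n) log.  Lower bound: the tilted point z = (1-s) y + s e_1 dominates x with room
   to spare, so a rounding mu of n z with partial sums at least those of n z dominates
   lambda for large n, while mu/n stays close to y; the single term of mu already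
   gives phi(y) - eps. *)

Section LogOverLinear.
Variable R : realType.

Lemma ln_le_lnD_div (x k : R) : 0 < x -> 0 < k -> ln x <= ln k + x / k.
Proof.
move=> x0 k0; have xk0 : 0 < x / k by rewrite divr_gt0.
have -> : ln x = ln k + ln (x / k) by rewrite -lnM ?posrE // mulrC divfK ?gt_eqF.
by rewrite lerD2l; exact/ltW/ln_sublinear.
Qed.

Lemma cvg_ln_succn_div : (fun n => ln n.+1%:R / n%:R : R) @ \oo --> 0.
Proof.
apply/cvgrPdist_le => e e0.
pose k : R := (Num.truncn (4 / e)).+1%:R.
have k0 : 0 < k by rewrite ltr0n.
have k_large : 4 / k <= e.
  rewrite ler_pdivrMr // mulrC -ler_pdivrMr //; exact/ltW/truncnS_gt.
near=> n.
have n1 : 1 <= n%:R :> R by rewrite ler1n; near: n; exact: nbhs_infty_gt.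
have n0 : 0 < n%:R :> R by lra.
have ln0 : 0 <= ln n.+1%:R :> R by rewrite ln_ge0 // ler1n.
rewrite sub0r normrN ger0_norm ?divr_ge0 ?ler0n // ler_pdivrMr //.
apply: le_trans (ln_le_lnD_div (ltr0Sn _ n) k0) _.
have lnk_small : ln k <= e / 2 * n%:R.
  have : (e / 2)^-1 * ln k < n%:R by near: n; exact: nbhs_infty_gtr.
  by rewrite -ltr_pdivlMl ?invr_gt0 ?divr_gt0 // invrK => /ltW.
have ratio_small : n.+1%:R / k <= e / 2 * n%:R.
  rewrite ler_pdivrMr // -natr1.
  have : 4 <= e * k by rewrite -ler_pdivrMr // mulrC.
  nra.
by rewrite [e in leRHS]splitr mulrDl; exact: lerD.
Unshelve. all: by end_near.
Qed.

End LogOverLinear.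

Lemma mx_norm_le (R : realDomainType) (m n : nat) (v : 'M[R]_(m, n)) (c : R) :
  0 <= c -> (forall i j, `|v i j| <= c) -> `|v| <= c.
Proof.
move=> c0 vc; rewrite [leLHS]/Num.norm /= mx_normrE.
by apply/bigmax_leP; split => // -[i j] _; exact: vc.
Qed.

Lemma closed_le_continuous (R : realType) (T : topologicalType) (f g : T -> R) :
  continuous f -> continuous g -> closed [set t | f t <= g t].
Proof.
move=> cf cg.
have -> : [set t | f t <= g t] = (fun t => g t - f t) @^-1` [set r | 0 <= r].
  by apply/seteqP; split => t /=; rewrite subr_ge0.
apply: preimage_closed; last exact: closed_ge.
by move=> t _; apply: cvgB; [exact: cg | exact: cf].
Qed.

Section Simplex.
Variables (R : realType) (th : nat).
Implicit Types (x y z : 'rV[R]_th).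

Definition psum y (i : 'I_th) : R := \sum_(j < th | (j <= i)%N) y ord0 j.

Lemma continuous_sum_entries (P : pred 'I_th) :
  continuous (fun y : 'rV[R]_th => \sum_(j < th | P j) y ord0 j).
Proof.
move=> y; apply: cvg_big; [exact: add_continuous | exact: nbhs_filter |].
by move=> j _; exact: coord_continuous.
Qed.

Lemma continuous_psum i : continuous (psum ^~ i).
Proof. exact: continuous_sum_entries. Qed.

Lemma closed_Delta : closed (@Delta R th).
Proof.
pose le_coord (i j : 'I_th) := [set y : 'rV[R]_th | y ord0 j <= y ord0 i].
have -> : @Delta R th =
    (\bigcap_i [set y : 'rV[R]_th | 0 <= y ord0 i]) `&`
    (\bigcap_i [set y : 'rV[R]_th | y ord0 i <= 1]) `&`
    (\bigcap_(p in [set p : 'I_th * 'I_th | (p.1 <= p.2)%N]) le_coord p.1 p.2) `&`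
    ([set y : 'rV[R]_th | \sum_i y ord0 i <= 1] `&` [set y | 1 <= \sum_i y ord0 i]).
  apply/seteqP; split => y /=.
    move=> [y01 [ydec ysum]]; rewrite ysum lexx; split => //; split.
    - by split=> i _ /=; case/andP: (y01 i).
    - by move=> [i j] /= /ydec.
  move=> [[[y0 y1] ydec] [ysum1 ysum1']]; split; last split.
  - by move=> i; rewrite (y0 i I) (y1 i I).
  - by move=> i j ij; exact: (ydec (i, j)).
  - exact/le_anti/andP.
have ccoord i : continuous (fun y : 'rV[R]_th => y ord0 i) by exact: coord_continuous.
have csum : continuous (fun y : 'rV[R]_th => \sum_i y ord0 i).
  exact: (@continuous_sum_entries xpredT).
repeat apply: closedI; try apply: closed_bigI => ? _;
  apply: closed_le_continuous => //; exact: cst_continuous.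
Qed.

Lemma closed_DeltaDom x : closed (@DeltaDom R th x).
Proof.
have -> : DeltaDom x = @Delta R th `&` \bigcap_i [set y | psum x i <= psum y i].
  by apply/seteqP; split => y [Dy ydom]; split => // i; [move=> _; exact: ydom | exact: ydom i I].
apply: closedI; first exact: closed_Delta.
apply: closed_bigI => i _; apply: closed_le_continuous; last exact: continuous_psum.
exact: cst_continuous.
Qed.

Lemma Delta_norm_le1 y : Delta y -> `|y| <= 1.
Proof.
move=> [y01 _]; apply: mx_norm_le => // i j; rewrite (ord1 i).
by case/andP: (y01 j) => y0 y1; rewrite ger0_norm.
Qed.

Lemma compact_Delta : compact (@Delta R th).
Proof.
apply: bounded_closed_compact; last exact: closed_Delta.
exists 1; split => // M M1 y /Delta_norm_le1 /le_trans; apply; exact: ltW.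
Qed.

Lemma compact_DeltaDom x : compact (@DeltaDom R th x).
Proof.
apply: subclosed_compact compact_Delta _; first exact: closed_DeltaDom.
by move=> y [].
Qed.

Lemma psum_le1 y i : Delta y -> psum y i <= 1.
Proof.
move=> [y01 [_ <-]]; rewrite /psum [leRHS](bigID (fun j : 'I_th => (j <= i)%N)) /=.
by rewrite lerDl sumr_ge0 // => j _; case/andP: (y01 j).
Qed.

End Simplex.

Section Normalize.
Variables (R : realType) (th : nat).
Implicit Types (l m : 'I_th -> nat).

Lemma part_entry_le n m i : is_part n m -> (m i <= n)%N.
Proof. by case/andP => _ /eqP <-; rewrite (bigD1 i) //= leq_addr. Qed.

Lemma psum_normalize n m i :
  psum (normalize R n m) i = (\sum_(j < th | (j <= i)%N) m j)%:R / n%:R.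
Proof. by rewrite /psum natr_sum mulr_suml; apply: eq_bigr => j _; rewrite mxE. Qed.

Lemma Delta_normalize n m : (0 < n)%N -> is_part n m -> Delta (normalize R n m).
Proof.
move=> n0 mpart; have n0' : (0 : R) < n%:R by rewrite ltr0n.
split; [|split].
- move=> i; rewrite mxE divr_ge0 ?ler0n //= ler_pdivrMr // mul1r ler_nat.
  exact: part_entry_le.
- move=> i j ij; rewrite !mxE ler_wpM2r ?invr_ge0 ?ler0n // ler_nat.
  by case/andP: mpart => /forallP /(_ i) /forallP /(_ j) /implyP /(_ ij).
- case/andP: mpart => _ /eqP msum.
  under eq_bigr => i _ do rewrite mxE.
  by rewrite -mulr_suml -natr_sum msum divff // gt_eqF.
Qed.

Lemma dom_real_normalize n l m :
  dom_nat m l -> dom_real (normalize R n m) (normalize R n l).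
Proof.
move=> /forallP ml i; rewrite -/(psum _ i) -/(psum _ i) !psum_normalize.
by rewrite ler_wpM2r ?invr_ge0 ?ler0n // ler_nat.
Qed.

End Normalize.

Section DominatingSum.
Variables (R : realType) (th : nat).

Definition sum_dominating (n : nat) (l : 'I_th -> nat) (f : ('I_th -> nat) -> R) : R :=
  \sum_(m : {ffun 'I_th -> 'I_n.+1} |
          is_part n (fun i => nat_of_ord (m i)) && dom_nat (fun i => nat_of_ord (m i)) l)
    f (fun i => nat_of_ord (m i)).

Lemma sum_dominating_ge_term n l m f :
  is_part n m -> dom_nat m l -> (forall m', 0 <= f m') -> f m <= sum_dominating n l f.
Proof.
move=> mpart ml f0.
pose m0 : {ffun 'I_th -> 'I_n.+1} := [ffun i => inord (m i)].
have m0E : (fun i => nat_of_ord (m0 i)) = m.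
  by apply: funext => i; rewrite ffunE inordK // ltnS; exact: part_entry_le.
rewrite /sum_dominating (bigD1 m0) /=; last by rewrite m0E mpart ml.
by rewrite m0E lerDl sumr_ge0.
Qed.

Lemma dom_nat_refl (l : 'I_th -> nat) : dom_nat l l.
Proof. by apply/forallP => i. Qed.

Lemma sum_dominating_gt0 n l f :
  is_part n l -> (forall m, 0 < f m) -> 0 < sum_dominating n l f.
Proof.
move=> lpart f0; apply: lt_le_trans (f0 l) _.
by apply: sum_dominating_ge_term (dom_nat_refl l) _ => // m; exact: ltW.
Qed.

Lemma sum_dominating_le n l f (C : R) :
  0 <= C -> (forall m, is_part n m -> dom_nat m l -> f m <= C) ->
  sum_dominating n l f <= C * (n.+1 ^ th)%:R.
Proof.
move=> C0 fC; apply: le_trans (_ : \sum_(m : {ffun 'I_th -> 'I_n.+1} |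
    is_part n (fun i => nat_of_ord (m i)) && dom_nat (fun i => nat_of_ord (m i)) l) C <= _).
  by apply: ler_sum => m /andP [mpart ml]; exact: fC.
rewrite sumr_const -[C *+ _]mulr_natr ler_wpM2l // ler_nat.
by apply: leq_trans (max_card _) _; rewrite card_ffun !card_ord.
Qed.

End DominatingSum.

Lemma ord_le_first (n : nat) (i i0 : 'I_n) : val i0 = 0%N -> (i <= i0)%N -> i = i0.
Proof. by move=> i0_first ii0; apply: val_inj; apply/eqP; rewrite i0_first -leqn0 -i0_first. Qed.

Section Rounding.
Variables (R : realType) (th n : nat) (i0 : 'I_th) (z : 'rV[R]_th).
Hypotheses (i0_first : val i0 = 0%N) (Dz : Delta z).

Definition scaled_floor (j : 'I_th) : nat := Num.truncn (n%:R * z ord0 j).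

Definition round_part (j : 'I_th) : nat :=
  if j == i0 then (n - \sum_(k < th | k != i0) scaled_floor k)%N else scaled_floor j.

Let z_ge0 j : 0 <= z ord0 j.
Proof. by case/andP: (Dz.1 j). Qed.

Let sum_others : \sum_(k < th | k != i0) z ord0 k = 1 - z ord0 i0.
Proof. by rewrite -Dz.2.2 [in RHS](bigD1 i0) //= addrAC subrr add0r. Qed.

Let i0_le i : (i0 <= i)%N.
Proof. by rewrite i0_first. Qed.

Lemma scaled_floor_itv j :
  (scaled_floor j)%:R <= n%:R * z ord0 j < (scaled_floor j).+1%:R.
Proof. by apply: truncn_itv; rewrite mulr_ge0 ?ler0n. Qed.

Lemma sum_scaled_floor_le :
  (\sum_(k < th | k != i0) scaled_floor k)%:R <= n%:R * (1 - z ord0 i0).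
Proof.
rewrite -sum_others natr_sum mulr_sumr; apply: ler_sum => k _.
by case/andP: (scaled_floor_itv k).
Qed.

Let sum_scaled_floor_le_n : (\sum_(k < th | k != i0) scaled_floor k <= n)%N.
Proof.
rewrite -(ler_nat R); apply: le_trans sum_scaled_floor_le _.
by rewrite ler_piMr ?ler0n // lerBlDr lerDl.
Qed.

Lemma round_part_first :
  (round_part i0)%:R = n%:R - (\sum_(k < th | k != i0) scaled_floor k)%:R :> R.
Proof. by rewrite /round_part eqxx natrB. Qed.

Lemma round_part_others j : j != i0 -> round_part j = scaled_floor j.
Proof. by rewrite /round_part => /negbTE ->. Qed.

Lemma sum_round_part : (\sum_(j < th) round_part j)%N = n.
Proof.
rewrite (bigD1 i0) //= {1}/round_part eqxx (eq_bigr scaled_floor) ?subnK //.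
by move=> j /round_part_others.
Qed.

Lemma is_part_round_part : is_part n round_part.
Proof.
apply/andP; split; last exact/eqP/sum_round_part.
apply/forallP => i; apply/forallP => j; apply/implyP => ij.
have [ji0|ji0] := eqVneq j i0.
  by move: ij; rewrite ji0 => /(ord_le_first i0_first) ->.
rewrite (round_part_others ji0).
have [->|ii0] := eqVneq i i0; last first.
  by rewrite (round_part_others ii0) le_truncn // ler_wpM2l ?ler0n // Dz.2.1.
rewrite -(ler_nat R) round_part_first lerBrDr.
apply: le_trans (_ : n%:R * z ord0 i0 + n%:R * (1 - z ord0 i0) <= _); last first.
  by rewrite -mulrDr subrKC mulr1.
apply: lerD; last exact: sum_scaled_floor_le.
apply: le_trans (_ : n%:R * z ord0 j <= _); first by case/andP: (scaled_floor_itv j).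
by rewrite ler_wpM2l ?ler0n // Dz.2.1.
Qed.

(* The complement of every initial segment avoids [i0], so it only contains floors. *)
Lemma psum_round_part_ge i :
  n%:R * psum z i <= (\sum_(j < th | (j <= i)%N) round_part j)%:R.
Proof.
have split_n : (\sum_(j < th | (j <= i)%N) round_part j +
                \sum_(j < th | ~~ (j <= i)%N) scaled_floor j)%N = n.
  rewrite -sum_round_part [RHS](bigID (fun j : 'I_th => (j <= i)%N)) /=.
  congr addn; apply: eq_bigr => j ji; apply/esym/round_part_others.
  by apply: contraNneq ji => ->.
have -> : (\sum_(j < th | (j <= i)%N) round_part j)%:R =
          n%:R - (\sum_(j < th | ~~ (j <= i)%N) scaled_floor j)%:R :> R.
  by rewrite -split_n natrD addrK.
rewrite lerBrDr natr_sum.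
apply: le_trans (_ : n%:R * psum z i + n%:R * \sum_(j < th | ~~ (j <= i)%N) z ord0 j <= _).
  rewrite lerD2l mulr_sumr; apply: ler_sum => j _.
  by case/andP: (scaled_floor_itv j).
have total : psum z i + \sum_(j < th | ~~ (j <= i)%N) z ord0 j = 1.
  by rewrite -Dz.2.2 [RHS](bigID (fun j : 'I_th => (j <= i)%N)).
by rewrite -mulrDr total mulr1.
Qed.

Lemma round_part_near i : `|n%:R * z ord0 i - (round_part i)%:R| <= th%:R.
Proof.
have floor_gap j : 0 <= n%:R * z ord0 j - (scaled_floor j)%:R <= 1.
  case/andP: (scaled_floor_itv j); rewrite -natr1 => lo hi.
  by apply/andP; split; lra.
have [->|ii0] := eqVneq i i0; last first.
  rewrite round_part_others // ger0_norm; last by case/andP: (floor_gap i).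
  apply: le_trans (_ : 1 <= _); first by case/andP: (floor_gap i).
  by rewrite ler1n; apply: leq_ltn_trans (ltn_ord i0); rewrite i0_first.
have -> : n%:R * z ord0 i0 - (round_part i0)%:R =
          - \sum_(k < th | k != i0) (n%:R * z ord0 k - (scaled_floor k)%:R).
  by rewrite round_part_first sumrB -mulr_sumr natr_sum sum_others; ring.
rewrite normrN ger0_norm; last by apply: sumr_ge0 => k _; case/andP: (floor_gap k).
apply: le_trans (_ : \sum_(k < th) 1 <= _); last by rewrite sumr_const card_ord.
rewrite [leRHS](bigD1 i0) //= ler_wpDl //; apply: ler_sum => k _.
by case/andP: (floor_gap k).
Qed.

Lemma round_part_dom (l : 'I_th -> nat) : (0 < n)%N ->
  (forall i, psum (normalize R n l) i <= psum z i) -> dom_nat round_part l.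
Proof.
move=> n0 lz; have n0' : (0 : R) < n%:R by rewrite ltr0n.
apply/forallP => i; rewrite -(ler_nat R); apply: le_trans (psum_round_part_ge i).
rewrite -[X in X <= _](@divfK _ n%:R) ?gt_eqF // -psum_normalize mulrC.
by rewrite ler_wpM2l ?ler0n.
Qed.

Lemma normalize_round_part_near i :
  (0 < n)%N -> `|z ord0 i - normalize R n round_part ord0 i| <= th%:R / n%:R.
Proof.
move=> n0; have n0' : (0 : R) < n%:R by rewrite ltr0n.
have -> : z ord0 i - normalize R n round_part ord0 i =
          (n%:R * z ord0 i - (round_part i)%:R) / n%:R.
  by rewrite mxE; field; rewrite gt_eqF.
by rewrite normrM normfV normr_nat ler_wpM2r ?invr_ge0 ?ler0n // round_part_near.
Qed.

End Rounding.

Lemma continuous_within_entrywise_lt (R : realType) (th : nat)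
    (A : set 'rV[R]_th) (f : 'rV[R]_th -> R) (y : 'rV[R]_th) (c : R) :
  {within A, continuous f} -> A y -> 0 < c ->
  exists2 r : R, 0 < r & forall w, A w ->
    (forall i, `|y ord0 i - w ord0 i| <= r) -> f y - c < f w.
Proof.
move=> /subspace_continuousP cf Ay c0.
move/cvgrPdist_lt: (cf y Ay) => /(_ c c0) /nbhs_ballP [r r0 near_y].
exists (r / 2) => [|w Aw yw]; first by rewrite divr_gt0.
have : ball y r w.
  rewrite -ball_normE /ball_ /=; apply: le_lt_trans (_ : r / 2 < r); last first.
    by rewrite ltr_pdivrMr // ltr_pMr // ltr1n.
  apply: mx_norm_le; first by rewrite divr_ge0 // ltW.
  by move=> i j; rewrite (ord1 i) !mxE; exact: yw.
move=> /near_y /(_ Aw); rewrite ltr_norml => /andP [_ close].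
by move: close; rewrite /from_subspace; lra.
Qed.

Section DominanceDefect.
Variables (R : realType) (th : nat) (x : 'rV[R]_th).
Implicit Types w : 'rV[R]_th.

Definition dom_defect w : R := \sum_(i < th) Num.max 0 (psum x i - psum w i).

Lemma continuous_dom_defect : continuous dom_defect.
Proof.
have gap i : continuous (fun w : 'rV[R]_th => psum x i - psum w i).
  by move=> w; exact: (cvgB (@cst_continuous _ _ (psum x i) w) (@continuous_psum R th i w)).
move=> w; apply: cvg_big; [exact: add_continuous | exact: nbhs_filter |].
by move=> i _; exact (continuous_max (cvg_cst _) (gap i w)).
Qed.

Lemma dom_defect_gt0 w : ~ dom_real w x -> 0 < dom_defect w.
Proof.
move=> /existsNP [i /negP]; rewrite -ltNge -subr_gt0 => gap.
apply: lt_le_trans (_ : Num.max 0 (psum x i - psum w i) <= _).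
  by rewrite lt_max gap orbT.
by rewrite /dom_defect (bigD1 i) //= lerDl sumr_ge0 // => j _; rewrite le_max lexx.
Qed.

Lemma dom_defect_le w (eta : R) :
  0 <= eta -> (forall i, psum x i - psum w i <= eta) -> dom_defect w <= th%:R * eta.
Proof.
move=> eta0 w_eta; apply: le_trans (_ : \sum_(i < th) eta <= _).
  by apply: ler_sum => i _; rewrite ge_max eta0 w_eta.
by rewrite sumr_const card_ord mulr_natl.
Qed.

(* [maxr (dom_defect w) (M + c - phi w)] is continuous and positive on the compact
   [Delta], hence bounded below by some [2 th eta > 0]. *)
Lemma almost_dominating_lt (phi : 'rV[R]_th -> R) (M c : R) :
  (0 < th)%N -> {within @Delta R th, continuous phi} -> Delta x ->
  (forall z, DeltaDom x z -> phi z <= M) -> 0 < c ->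
  exists2 eta : R, 0 < eta & forall w, Delta w ->
    (forall i, psum x i - psum w i <= eta) -> phi w < M + c.
Proof.
move=> th0 cphi Dx phiM c0.
pose G w := Num.max (dom_defect w) (M + c - phi w).
have cG : {within @Delta R th, continuous G}.
  move=> w; apply: continuous_max.
    exact: (continuous_subspaceT continuous_dom_defect).
  exact: (cvgB (@cst_continuous _ _ (M + c) w) (cphi w)).
have [w0 /[!inE] Dw0 w0_min] := EVT_min_rV (ex_intro _ x Dx) (@compact_Delta R th) cG.
have G0 : 0 < G w0.
  rewrite lt_max; have [w0x|w0x] := pselect (dom_real w0 x).
    by rewrite subr_gt0 ltr_pwDr ?phiM ?orbT.
  by rewrite dom_defect_gt0.
have th0' : (0 : R) < th%:R by rewrite ltr0n.
exists (G w0 / (2 * th%:R)) => [|w Dw w_eta]; first by rewrite divr_gt0 ?mulr_gt0.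
have := w0_min w; rewrite inE => /(_ Dw); rewrite le_max => /orP [defect_big|]; last lra.
have : dom_defect w <= G w0 / 2.
  apply: le_trans (dom_defect_le _ w_eta) _; first by rewrite divr_ge0 ?mulr_ge0 ?ltW.
  by rewrite le_eqVlt; apply/orP; left; apply/eqP; field; rewrite gt_eqF.
lra.
Qed.

End DominanceDefect.

Section Tilt.
Variables (R : realType) (th : nat) (i0 : 'I_th) (s : R) (y : 'rV[R]_th).
Hypotheses (i0_first : val i0 = 0%N) (s01 : 0 <= s <= 1) (Dy : Delta y).

Definition tilt : 'rV[R]_th := \row_i ((1 - s) * y ord0 i + s * (i == i0)%:R).

Let sum_indicator (P : pred 'I_th) : P i0 -> \sum_(j < th | P j) ((j == i0)%:R : R) = 1.
Proof.
move=> Pi0; rewrite (bigD1 i0) //= eqxx big1 ?addr0 // => j /andP [_].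
by move/negbTE ->.
Qed.

Lemma psum_tilt i : psum tilt i = (1 - s) * psum y i + s.
Proof.
rewrite /psum; under eq_bigr => j _ do rewrite mxE.
by rewrite big_split /= -!mulr_sumr sum_indicator ?mulr1 // i0_first.
Qed.

Lemma Delta_tilt : Delta tilt.
Proof.
case: Dy => y01 [ydec ysum]; case/andP: s01 => s0 s1.
split; [|split].
- move=> i; rewrite mxE; case/andP: (y01 i) => y0 y1.
  by case: (i == i0) => /=; apply/andP; split; nra.
- move=> i j ij; rewrite !mxE.
  have [ji0|ji0] := eqVneq j i0.
    by move: ij; rewrite ji0 => /(ord_le_first i0_first) ->; rewrite eqxx.
  have := ydec i j ij; case/andP: (y01 i) => y0 _.
  by case: (i == i0) => /=; nra.
- under eq_bigr => j _ do rewrite mxE.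
  by rewrite big_split /= -!mulr_sumr sum_indicator // ysum; ring.
Qed.

Lemma tilt_near i : `|y ord0 i - tilt ord0 i| <= s.
Proof.
rewrite mxE; case/andP: (Dy.1 i) => y0 y1; case/andP: s01 => s0 s1.
by rewrite ler_norml; case: (i == i0) => /=; apply/andP; split; nra.
Qed.

End Tilt.

Section LogSumExp.
Variables (R : realType) (th : nat) (phi : 'rV[R]_th -> R)
  (phin : nat -> ('I_th -> nat) -> ('I_th -> nat) -> R) (delta : nat -> R)
  (lam : nat -> ('I_th -> nat)) (x y : 'rV[R]_th).
Hypotheses (th_gt0 : (0 < th)%N)
  (cphi : {within @Delta R th, continuous phi}) (delta0 : delta @ \oo --> 0)
  (phin_near : forall n l m, (0 < n)%N -> is_part n l -> is_part n m ->
     `|phin n l m - phi (normalize R n m)| <= delta n)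
  (lam_part : forall n, is_part n (lam n)) (Dx : Delta x)
  (lam_cvg : (fun n => normalize R n (lam n)) @ \oo --> x)
  (y_dom : DeltaDom x y) (y_max : forall z, DeltaDom x z -> phi z <= phi y).

Let S n := sum_dominating n (lam n) (fun m => expR (n%:R * phin n (lam n) m)).

Let near_n_gt0 : \forall n \near \oo, (0 < n)%N.
Proof. exact: nbhs_infty_gt. Qed.

Let near_delta_le eps : 0 < eps -> \forall n \near \oo, `|delta n| <= eps.
Proof.
move=> eps0; move/cvgrPdist_le: delta0 => /(_ eps eps0).
by apply: filterS => n; rewrite sub0r normrN.
Qed.

Let near_psum_lam_close i eps : 0 < eps ->
  \forall n \near \oo, `|psum x i - psum (normalize R n (lam n)) i| <= eps.
Proof.
move=> eps0; apply: (proj1 (cvgrPdist_le _ _) _ eps eps0).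
exact: (cvg_comp _ _ lam_cvg (@continuous_psum R th i x)).
Qed.

Let near_psum_lam_le_tilt (i0 : 'I_th) s : val i0 = 0%N -> 0 < s <= 1 ->
  \forall n \near \oo, forall i, psum (normalize R n (lam n)) i <= psum (tilt i0 s y) i.
Proof.
move=> i0_first /andP [s0 s1]; apply: filter_forall => i; rewrite psum_tilt //.
have [y_lt1|y_ge1] := ltP (psum y i) 1.
  have gap0 : 0 < s * (1 - psum y i) by rewrite mulr_gt0 // subr_gt0.
  apply: filterS (near_psum_lam_close i gap0) => n; rewrite ler_norml => /andP [lo _].
  have xy : psum x i <= psum y i := y_dom.2 i.
  nra.
apply: filterS near_n_gt0 => n n0.
have := psum_le1 i (Delta_normalize R n0 (lam_part n)); nra.
Qed.

Let near_th_ln_le (eps : R) : 0 < eps ->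
  \forall n \near \oo, th%:R * ln n.+1%:R <= eps * n%:R.
Proof.
move=> eps0; have th0 : (0 : R) < th%:R by rewrite ltr0n.
move/cvgrPdist_le: (@cvg_ln_succn_div R) => /(_ (eps / th%:R)).
rewrite divr_gt0 // => /(_ isT) ln_small.
near=> n; have n0 : (0 : R) < n%:R by rewrite ltr0n; near: n; exact: near_n_gt0.
have : ln n.+1%:R / n%:R <= eps / th%:R.
  apply: le_trans (ler_norm _) _; rewrite -normrN -sub0r.
  by near: n; exact: ln_small.
rewrite ler_pdivrMr // mulrAC ler_pdivlMr // mulrC.
Unshelve. all: by end_near.
Qed.

Lemma near_log_sum_ge e : 0 < e -> \forall n \near \oo, phi y - e <= ln (S n) / n%:R.
Proof.
move=> e0; have e2 : 0 < e / 2 by rewrite divr_gt0.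
pose i0 : 'I_th := Ordinal th_gt0.
have i0_first : val i0 = 0%N by [].
have [r r0 phi_y_lb] := continuous_within_entrywise_lt cphi y_dom.1 e2.
pose s := Num.min (r / 2) 1.
have s0 : 0 < s by rewrite lt_min ltr01 andbT divr_gt0.
have s01 : 0 <= s <= 1 by rewrite ltW //= ge_min lexx orbT.
have sr : s <= r / 2 by rewrite ge_min lexx.
pose z := tilt i0 s y.
have Dz : Delta z := Delta_tilt i0_first s01 y_dom.1.
near=> n.
have n0 : (0 < n)%N by near: n; exact: near_n_gt0.
have n0' : (0 : R) < n%:R by rewrite ltr0n.
pose mu := round_part n i0 z.
have mu_part : is_part n mu by exact: is_part_round_part.
have mu_dom : dom_nat mu (lam n).
  apply: (round_part_dom i0_first Dz n0).
  by near: n; apply: near_psum_lam_le_tilt => //; rewrite s0 (andP s01).2.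
have th_n : th%:R / n%:R <= r / 2.
  rewrite ler_pdivrMr // mulrC -ler_pdivrMr ?divr_gt0 //; apply: ltW.
  by near: n; exact: nbhs_infty_gtr.
have mu_near_y i : `|y ord0 i - normalize R n mu ord0 i| <= r.
  apply: le_trans (ler_distD (z ord0 i) _ _) _.
  have := tilt_near i0 s01 y_dom.1 i; have := normalize_round_part_near i0_first Dz i n0.
  lra.
have phi_mu := phi_y_lb _ (Delta_normalize R n0 mu_part) mu_near_y.
have := phin_near n0 (lam_part n) mu_part.
have : `|delta n| <= e / 2 by near: n; exact: near_delta_le.
rewrite !ler_norml => /andP [d_lo d_hi] /andP [p_lo p_hi].
rewrite ler_pdivlMr // -ler_expR lnK ?posrE; last first.
  by apply: sum_dominating_gt0 => // m; exact: expR_gt0.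
apply: le_trans (sum_dominating_ge_term mu_part mu_dom _) => [|m]; last exact: expR_ge0.
by rewrite ler_expR mulrC ler_wpM2l ?ler0n //; lra.
Unshelve. all: by end_near.
Qed.

Lemma near_log_sum_le e : 0 < e -> \forall n \near \oo, ln (S n) / n%:R <= phi y + e.
Proof.
move=> e0; have e2 : 0 < e / 2 by rewrite divr_gt0.
have e4 : 0 < e / 4 by rewrite divr_gt0.
have [eta eta0 phi_lt] := almost_dominating_lt th_gt0 cphi Dx y_max e2.
near=> n.
have n0 : (0 < n)%N by near: n; exact: near_n_gt0.
have n0' : (0 : R) < n%:R by rewrite ltr0n.
have lam_close : forall i, psum x i - psum (normalize R n (lam n)) i <= eta.
  near: n; apply: filter_forall => i.
  by apply: filterS (near_psum_lam_close i eta0) => n; rewrite ler_norml => /andP [].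
have : `|delta n| <= e / 4 by near: n; exact: near_delta_le.
rewrite ler_norml => /andP [d_lo d_hi].
pose K := phi y + e / 2 + e / 4.
have S_le : S n <= expR (n%:R * K) * (n.+1 ^ th)%:R.
  apply: sum_dominating_le => [|m m_part m_dom]; first exact/ltW/expR_gt0.
  rewrite ler_expR ler_wpM2l ?ler0n //.
  have := phi_lt _ (Delta_normalize R n0 m_part)
    (fun i => le_trans (lerB (lexx _) (dom_real_normalize R n m_dom i)) (lam_close i)).
  have := phin_near n0 (lam_part n) m_part.
  by rewrite ler_norml => /andP [_ p_hi]; rewrite /K; lra.
have S_pos : 0 < S n by apply: sum_dominating_gt0 => // m; exact: expR_gt0.
have bound_pos : 0 < expR (n%:R * K) * (n.+1 ^ th)%:R.
  by rewrite mulr_gt0 ?expR_gt0 ?ltr0n ?expn_gt0.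
have ln_small : th%:R * ln n.+1%:R <= e / 4 * n%:R by near: n; exact: near_th_ln_le.
rewrite ler_pdivrMr //; apply: le_trans (_ : _ <= ln (expR (n%:R * K) * (n.+1 ^ th)%:R)) _.
  by rewrite ler_ln ?posrE.
rewrite lnM ?posrE ?expR_gt0 ?ltr0n ?expn_gt0 // expRK natrX lnXn ?ltr0n // -mulr_natl /K.
lra.
Unshelve. all: by end_near.
Qed.

End LogSumExp.

Theorem lemma3p2 (R : realType) (th : nat) (hth : (2 <= th)%N)
  (phi : 'rV[R]_th -> R)
  (phin : nat -> ('I_th -> nat) -> ('I_th -> nat) -> R)
  (delta : nat -> R)
  (lam : nat -> ('I_th -> nat)) (x : 'rV[R]_th) :
  {within @Delta R th, continuous phi} ->
  delta @ \oo --> 0 ->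
  (forall (n : nat) (l m : 'I_th -> nat), (0 < n)%N ->
     is_part n l -> is_part n m ->
     `| phin n l m - phi (@normalize R th n m) | <= delta n) ->
  (forall n : nat, is_part n (lam n)) ->
  @Delta R th x ->
  (fun n => @normalize R th n (lam n)) @ \oo --> x ->
  exists2 y : 'rV[R]_th, DeltaDom x y /\ (forall z, DeltaDom x z -> phi z <= phi y) &
    (fun n : nat =>
       ln (\sum_(m : {ffun 'I_th -> 'I_n.+1} |
                 is_part n (fun i => nat_of_ord (m i)) &&
                 dom_nat (fun i => nat_of_ord (m i)) (lam n))
             expR (n%:R * phin n (lam n) (fun i => nat_of_ord (m i)))) / n%:R)
      @ \oo --> phi y.
Proof.
move=> cphi delta0 phin_near lam_part Dx lam_cvg.
have th_gt0 : (0 < th)%N := leq_trans (isT : 0 < 2)%N hth.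
have DeltaDom_x0 : DeltaDom x !=set0 by exists x; split => // i.
have cphi_dom : {within DeltaDom x, continuous phi}.
  by apply: continuous_subspaceW cphi => z [].
have [y /[!inE] y_dom y_max] := EVT_max_rV DeltaDom_x0 (@compact_DeltaDom R th x) cphi_dom.
have {}y_max z : DeltaDom x z -> phi z <= phi y by move=> zD; apply: y_max; rewrite inE.
exists y => //; apply/cvgrPdist_le => e e0; near=> n.
rewrite ler_distlC; apply/andP; split.
- by near: n; exact: (near_log_sum_ge th_gt0 cphi delta0 phin_near lam_part lam_cvg y_dom).
- by near: n; exact: (near_log_sum_le th_gt0 cphi delta0 phin_near lam_part Dx lam_cvg y_max).
Unshelve. all: by end_near.
Qed.
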